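(* Let $R$ be a commutative ring and $(M_t,M_h;\mu_a,\mu_b)$ an object of $\mathrm{Rep}_R(\varkappa)$. Put $K=\ker(\mu_a)\cap\ker(\mu_b)$, $L_t=M_t/K$, $L_h=M_h$, $\lambda_a(m+K)=\mu_a(m)$, $\lambda_b(m+K)=\mu_b(m)$, $f_t(m)=m+K$ and $f_h=\mathrm{id}_{M_h}$. Then $(f_t,f_h)\colon(M_t,M_h;\mu_a,\mu_b)\to(L_t,L_h;\lambda_a,\lambda_b)$ is a $\mathrm{Rel}_R(\varkappa)$-envelope.
   Context: $\mathrm{Rep}_R(\varkappa)$: objects $(M_t,M_h;\mu_a,\mu_b)$ with $\mu_a,\mu_b\in\mathrm{Hom}_R(M_t,M_h)$, morphisms pairs $(f_t,f_h)$ of $R$-linear maps with $f_h\mu_c=\mu'_cf_t$ ($c=a,b$). $\mathrm{Rel}_R(\varkappa)$: full subcategory of objects with $\ker(\mu_a)\cap\ker(\mu_b)=0$. For a full subcategory $\mathcal{C}$, a $\mathcal{C}$-preenvelope of $M$ is a morphism $b\colon M\to N$ with $N\in\mathcal{C}$ such that every morphism $M\to C$ with $C\in\mathcal{C}$ factors as $ab$; a $\mathcal{C}$-envelope is a preenvelope $b$ such that every endomorphism $a$ of $N$ with $ab=b$ is an isomorphism. *)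

From HB Require Import structures.
From mathcomp Require Import all_boot all_algebra generic_quotient.
Set Implicit Arguments. Unset Strict Implicit. Unset Printing Implicit Defensive.
Import GRing.Theory.
Local Open Scope ring_scope.
Local Open Scope quotient_scope.

Record rep (R : comNzRingType) := Rep {
  Mt : lmodType R;
  Mh : lmodType R;
  mua : {linear Mt -> Mh};
  mub : {linear Mt -> Mh} }.
Arguments Rep {R}.

Definition is_rep_hom (R : comNzRingType) (M N : rep R)
  (ft : Mt M -> Mt N) (fh : Mh M -> Mh N) : Prop :=
  [/\ linear ft, linear fh,
      (forall m, fh (mua M m) = mua N (ft m)) &
      (forall m, fh (mub M m) = mub N (ft m))].

Definition in_Rel (R : comNzRingType) (M : rep R) : Prop :=
  forall m : Mt M, mua M m = 0 -> mub M m = 0 -> m = 0.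

Definition is_rep_iso (R : comNzRingType) (M N : rep R)
  (ft : Mt M -> Mt N) (fh : Mh M -> Mh N) : Prop :=
  is_rep_hom ft fh /\
  exists (gt : Mt N -> Mt M) (gh : Mh N -> Mh M),
    [/\ is_rep_hom gt gh, cancel ft gt, cancel gt ft, cancel fh gh & cancel gh fh].

Definition is_Rel_preenvelope (R : comNzRingType) (M N : rep R)
  (bt : Mt M -> Mt N) (bh : Mh M -> Mh N) : Prop :=
  [/\ is_rep_hom bt bh, in_Rel N &
      forall (C : rep R) (gt : Mt M -> Mt C) (gh : Mh M -> Mh C),
        in_Rel C -> is_rep_hom gt gh ->
        exists (at_ : Mt N -> Mt C) (ah : Mh N -> Mh C),
          [/\ is_rep_hom at_ ah, at_ \o bt =1 gt & ah \o bh =1 gh]].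

Definition is_Rel_envelope (R : comNzRingType) (M N : rep R)
  (bt : Mt M -> Mt N) (bh : Mh M -> Mh N) : Prop :=
  is_Rel_preenvelope bt bh /\
  forall (at_ : Mt N -> Mt N) (ah : Mh N -> Mh N),
    is_rep_hom at_ ah -> at_ \o bt =1 bt -> ah \o bh =1 bh -> is_rep_iso at_ ah.

Section KerQuot.
Variables (R : comNzRingType) (M : rep R).

Definition kerK : {pred Mt M} := fun m => (mua M m == 0) && (mub M m == 0).

Definition kerK_rel : rel (Mt M) := fun x y => (x - y) \in kerK.

Lemma kerK_relE x y : kerK_rel x y = (mua M x == mua M y) && (mub M x == mub M y).
Proof. by rewrite /kerK_rel unfold_in /kerK !raddfB /= !subr_eq0. Qed.

Lemma kerK_refl : reflexive kerK_rel.
Proof. by move=> x; rewrite kerK_relE !eqxx. Qed.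
Lemma kerK_sym : symmetric kerK_rel.
Proof. by move=> x y; rewrite !kerK_relE [mua M x == _]eq_sym [mub M x == _]eq_sym. Qed.
Lemma kerK_trans : transitive kerK_rel.
Proof.
move=> y x z; rewrite !kerK_relE => /andP[/eqP -> /eqP ->] /andP[/eqP -> /eqP ->].
by rewrite !eqxx.
Qed.

Canonical kerK_equiv := EquivRel kerK_rel kerK_refl kerK_sym kerK_trans.

Definition quotK := {eq_quot kerK_equiv}.
HB.instance Definition _ := Choice.on quotK.

Definition qpi (m : Mt M) : quotK := \pi_quotK m.

Lemma qpi_eq x y : (qpi x = qpi y) <-> (mua M x = mua M y /\ mub M x = mub M y).
Proof.
split=> [/eqmodP | [ea eb]].
  by rewrite /= kerK_relE => /andP[/eqP -> /eqP ->].
by apply/eqmodP; rewrite /= kerK_relE ea eb !eqxx.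
Qed.

Lemma qpiK (q : quotK) : qpi (repr q) = q.
Proof. exact: reprK. Qed.

Lemma repr_qpi x : mua M (repr (qpi x)) = mua M x /\ mub M (repr (qpi x)) = mub M x.
Proof. by apply/qpi_eq; rewrite qpiK. Qed.

Definition qzero : quotK := qpi 0.
Definition qadd (p q : quotK) : quotK := qpi (repr p + repr q).
Definition qopp (q : quotK) : quotK := qpi (- repr q).
Definition qscale (a : R) (q : quotK) : quotK := qpi (a *: repr q).

Lemma qaddE x y : qadd (qpi x) (qpi y) = qpi (x + y).
Proof.
apply/qpi_eq; have [a1 b1] := repr_qpi x; have [a2 b2] := repr_qpi y.
by rewrite !raddfD /= a1 a2 b1 b2.
Qed.
Lemma qoppE x : qopp (qpi x) = qpi (- x).
Proof. by apply/qpi_eq; have [a1 b1] := repr_qpi x; rewrite !raddfN /= a1 b1. Qed.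
Lemma qscaleE a x : qscale a (qpi x) = qpi (a *: x).
Proof. by apply/qpi_eq; have [a1 b1] := repr_qpi x; rewrite !linearZ /= a1 b1. Qed.

Lemma qind (P : quotK -> Prop) : (forall x, P (qpi x)) -> forall q, P q.
Proof. by move=> H q; rewrite -(qpiK q). Qed.

Lemma qaddA : associative qadd.
Proof. by elim/qind=> x; elim/qind=> y; elim/qind=> z; rewrite !qaddE addrA. Qed.
Lemma qaddC : commutative qadd.
Proof. by elim/qind=> x; elim/qind=> y; rewrite !qaddE addrC. Qed.
Lemma qadd0 : left_id qzero qadd.
Proof. by elim/qind=> x; rewrite /qzero qaddE add0r. Qed.
Lemma qaddN : left_inverse qzero qopp qadd.
Proof. by elim/qind=> x; rewrite qoppE qaddE addNr. Qed.

HB.instance Definition _ := GRing.isZmodule.Build quotK qaddA qaddC qadd0 qaddN.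

Lemma qaddE' x y : qpi x + qpi y = qpi (x + y). Proof. exact: qaddE. Qed.

Lemma qscaleA a b v : qscale a (qscale b v) = qscale (a * b) v.
Proof. by elim/qind: v => x; rewrite !qscaleE scalerA. Qed.
Lemma qscale1 : left_id 1 qscale.
Proof. by elim/qind=> x; rewrite qscaleE scale1r. Qed.
Lemma qscaleDr : right_distributive qscale +%R.
Proof. by move=> a; elim/qind=> x; elim/qind=> y; rewrite qaddE' !qscaleE scalerDr qaddE'. Qed.
Lemma qscaleDl v : {morph qscale^~ v : a b / a + b}.
Proof. by elim/qind: v => x a b; rewrite !qscaleE scalerDl qaddE'. Qed.

HB.instance Definition _ :=
  GRing.Zmodule_isLmodule.Build R quotK qscaleA qscale1 qscaleDr qscaleDl.

Lemma qscaleE' a x : a *: qpi x = qpi (a *: x). Proof. exact: qscaleE. Qed.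

Definition lama (q : quotK) : Mh M := mua M (repr q).
Definition lamb (q : quotK) : Mh M := mub M (repr q).

Lemma lama_qpi x : lama (qpi x) = mua M x. Proof. by case: (repr_qpi x). Qed.
Lemma lamb_qpi x : lamb (qpi x) = mub M x. Proof. by case: (repr_qpi x). Qed.

Lemma lama_linear : linear lama.
Proof.
move=> a; elim/qind=> x; elim/qind=> y.
by rewrite qscaleE' qaddE' !lama_qpi linearP.
Qed.
Lemma lamb_linear : linear lamb.
Proof.
move=> a; elim/qind=> x; elim/qind=> y.
by rewrite qscaleE' qaddE' !lamb_qpi linearP.
Qed.

HB.instance Definition _ := GRing.isLinear.Build R quotK (Mh M) _ lama lama_linear.
HB.instance Definition _ := GRing.isLinear.Build R quotK (Mh M) _ lamb lamb_linear.

Definition relQuot : rep R := Rep quotK (Mh M) lama lamb.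

End KerQuot.

(* Every morphism (g_t, g_h) from M into an object of Rel kills K: for k in K,
   lambda'_c (g_t k) = g_h (mu_c k) = 0 for c = a, b, so g_t k = 0.  Hence g_t
   factors through the surjection f_t : M_t -> M_t/K, which gives the
   preenvelope property.  Since f_t is surjective and f_h is the identity, an
   endomorphism a of (L_t, L_h) with a f = f is the identity, so f is an
   envelope. *)
From mathcomp Require Import all_boot all_algebra.
Set Implicit Arguments. Unset Strict Implicit. Unset Printing Implicit Defensive.
Import GRing.Theory.
Local Open Scope ring_scope.

Section RelEnvelope.
Variable R : comNzRingType.

Lemma linear_funB (U V : lmodType R) (f : U -> V) :
  linear f -> forall x y, f (x - y) = f x - f y.
Proof.
move=> lf x y; have := lf (-1) y x.
by rewrite !scaleN1r [x - y]addrC [f x - f y]addrC.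
Qed.

Lemma linear_fun0 (U V : lmodType R) (f : U -> V) : linear f -> f 0 = 0.
Proof. by move=> lf; rewrite -(subrr 0) linear_funB // subrr. Qed.

Lemma rep_hom_to_Rel_eq (M C : rep R) (gt : Mt M -> Mt C) (gh : Mh M -> Mh C) :
  in_Rel C -> is_rep_hom gt gh ->
  forall x y, mua M x = mua M y -> mub M x = mub M y -> gt x = gt y.
Proof.
move=> relC [lt lh ha hb] x y ea eb.
have gh_kills m1 m2 : m1 = m2 -> gh (m1 - m2) = 0.
  by move=> ->; rewrite subrr linear_fun0.
apply/eqP; rewrite -subr_eq0 -linear_funB //; apply/eqP/relC.
  by rewrite -ha raddfB /= gh_kills.
by rewrite -hb raddfB /= gh_kills.
Qed.

Lemma rep_iso_of_id (N : rep R) (at_ : Mt N -> Mt N) (ah : Mh N -> Mh N) :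
  at_ =1 id -> ah =1 id -> is_rep_iso at_ ah.
Proof.
move=> at_id ah_id.
have id_hom : is_rep_hom (M:=N) (N:=N) id id by [].
have at_hom : is_rep_hom at_ ah.
  by split=> [a x y|a x y|m|m]; rewrite ?at_id ?ah_id.
by split=> //; exists id, id; split=> // x /=; rewrite ?at_id ?ah_id.
Qed.

Variable M : rep R.

Lemma qpi_linear : linear (@qpi R M).
Proof. by move=> a x y; rewrite /= qscaleE' qaddE'. Qed.

Lemma qpi_is_rep_hom : is_rep_hom (N:=relQuot M) (@qpi R M) id.
Proof.
by split=> [|//|m|m] /=; [exact: qpi_linear | rewrite lama_qpi | rewrite lamb_qpi].
Qed.

Lemma relQuot_in_Rel : in_Rel (relQuot M).
Proof.
elim/qind=> x /=; rewrite lama_qpi lamb_qpi => ea eb.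
by apply/qpi_eq; rewrite ea eb !raddf0.
Qed.

Definition qlift (V : Type) (g : Mt M -> V) (q : quotK M) : V := g (repr q).

Section Lift.
Variables (C : rep R) (gt : Mt M -> Mt C) (gh : Mh M -> Mh C).
Hypotheses (relC : in_Rel C) (g_hom : is_rep_hom gt gh).

Lemma qlift_qpi x : qlift gt (@qpi R M x) = gt x.
Proof.
have [ea eb] := repr_qpi x.
exact: rep_hom_to_Rel_eq relC g_hom _ _ ea eb.
Qed.

Lemma qlift_is_rep_hom : is_rep_hom (M:=relQuot M) (qlift gt) gh.
Proof.
have [lt lh ha hb] := g_hom; have liftE := qlift_qpi.
split=> //.
- by move=> a; elim/qind=> x; elim/qind=> y; rewrite qscaleE' qaddE' /= !liftE lt.
- by elim/qind=> x /=; rewrite lama_qpi ha -liftE.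
- by elim/qind=> x /=; rewrite lamb_qpi hb -liftE.
Qed.

End Lift.
End RelEnvelope.

Theorem lemma3p7 (R : comNzRingType) (M : rep R) :
  @is_Rel_envelope R M (relQuot M) (@qpi R M) (fun m : Mh M => m).
Proof.
split; first split.
- exact: qpi_is_rep_hom.
- exact: relQuot_in_Rel.
- move=> C gt gh relC g_hom; exists (qlift gt), gh.
  by split=> [|x|]; [exact: qlift_is_rep_hom | exact: (qlift_qpi relC g_hom x) |].
- move=> at_ ah _ fix_t fix_h; apply: rep_iso_of_id => //.
  by elim/qind; exact: fix_t.
Qed.
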